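(* Let $s\ge 2$ and $t\ge 0$ be integers, and let $S=\{1+j(2t+4),\ 2t+3+j(2t+4) : 0\le j\le 2^{s-2}-1\}$, i.e. $S=\{1,\,2t+3,\,2t+5,\,4t+7,\dots,\,1+(2^{s-2}-1)(2t+4),\,2t+3+(2^{s-2}-1)(2t+4)\}$. Then $\chi_{la}(C_{2^s(t+2)}(S))=3$, where $C_{2^s(t+2)}(S)$ is the circulant graph with connection set $S$.
   Context: For an integer $n\ge 3$ and a set $S$ of integers, the circulant graph $C_n(S)$ has vertex set $\mathbb Z_n$, with distinct $u,v$ adjacent iff $u-v\equiv \pm a\pmod n$ for some $a\in S$. For a connected graph $G=(V,E)$ with $q=|E|$, a local antimagic labeling is a bijection $f:E\to\{1,\dots,q\}$ such that adjacent vertices $x,y$ satisfy $f^+(x)\ne f^+(y)$, where $f^+(x)=\sum f(e)$ over edges $e$ incident to $x$; $\chi_{la}(G)$ is the minimum number of distinct values of $f^+$ over all local antimagic labelings of $G$. *)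

From mathcomp Require Import all_boot.
Set Implicit Arguments. Unset Strict Implicit. Unset Printing Implicit Defensive.

Definition circ_adj (n : nat) (S : seq nat) (u v : 'I_n) : bool :=
  (u != v) &&
  has (fun a => ((u + n - v) %% n == a %% n) || ((v + n - u) %% n == a %% n)) S.

Definition circ_edges (n : nat) (S : seq nat) : {set {set 'I_n}} :=
  [set e : {set 'I_n} | [exists u : 'I_n, exists v : 'I_n,
     circ_adj S u v && (e == [set u; v])]].

Definition vsum (n : nat) (S : seq nat) (f : {set 'I_n} -> nat) (x : 'I_n) : nat :=
  \sum_(e in circ_edges n S | x \in e) f e.

Definition local_antimagic (n : nat) (S : seq nat) (f : {set 'I_n} -> nat) : Prop :=
  perm_eq [seq f e | e <- enum (circ_edges n S)] (iota 1 #|circ_edges n S|) /\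
  (forall x y : 'I_n, circ_adj S x y -> vsum S f x != vsum S f y).

Definition num_vsums (n : nat) (S : seq nat) (f : {set 'I_n} -> nat) : nat :=
  size (undup [seq vsum S f x | x <- enum 'I_n]).

Definition chi_la_is (n : nat) (S : seq nat) (k : nat) : Prop :=
  (exists f : {set 'I_n} -> nat, local_antimagic S f /\ num_vsums S f = k) /\
  (forall f : {set 'I_n} -> nat, local_antimagic S f -> k <= num_vsums S f).

Definition conn_set (s t : nat) : seq nat :=
  flatten [seq [:: 1 + j * (2 * t + 4); 2 * t + 3 + j * (2 * t + 4)]
          | j <- iota 0 (2 ^ (s - 2))].

From mathcomp Require Import all_boot zify.

(* Put m = 2t+4 and k = 2^(s-1), so that n = k m.  Every element of S is
   +-1 modulo m, and S together with -S contains every residue below n that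
   is +-1 modulo m; hence u ~ v iff u = v +- 1 (mod m): the graph is the cycle
   C_m with each vertex blown up into k independent vertices, and it is
   2k-regular.

   In a regular graph a local antimagic labeling never has only two vertex
   sums: the vertices carrying the first sum meet every edge exactly once, so
   both colour classes have total vertex sum equal to the sum of all labels
   and, by regularity, the same size, which forces the two sums to agree.

   Three sums are achieved by labelling the edge from vertex a of class c to
   vertex b of class c+1 with 1 + k^2 zigzag(c) + R_c(a, b).  Here zigzag is a
   permutation of Z_m such that zigzag(c) + zigzag(c-1) only takes the values
   m/2, m-1, m, and differs on consecutive classes; R_c is one of two
   enumerations of the k x k grid, chosen by the parity of c, such that a row
   sum of one plus a column sum of the other is constant. *)

Lemma sum_transversal (T : finType) (E : {set {set T}}) (A : {set T})
    (g : {set T} -> nat) :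
  (forall e, e \in E -> #|e :&: A| = 1) ->
  \sum_(x in A) \sum_(e in E | x \in e) g e = \sum_(e in E) g e.
Proof.
move=> EA; rewrite (exchange_big_dep (mem E)) /=; last by move=> x e _ /andP [].
apply: eq_bigr => e eE; rewrite (eq_bigl (mem (e :&: A))) ?sum_nat_const ?EA ?mul1n //.
by move=> x; rewrite !inE eE andbC.
Qed.

Lemma cards2I_eq1 (T : finType) (A : {set T}) x y :
  (x \in A) = (y \notin A) -> #|[set x; y] :&: A| = 1.
Proof.
wlog xA : x y / x \in A.
  move=> wlog_xA xyA; case xA: (x \in A); first exact: wlog_xA.
  have yA : y \in A by rewrite -[y \in A]negbK -xyA xA.
  by rewrite setUC; apply: wlog_xA; rewrite // xA yA.
move=> xyA; suff -> : [set x; y] :&: A = [set x] by rewrite cards1.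
apply/setP => z; rewrite !inE; case: (eqVneq z x) => [->|_] //=.
by case: (eqVneq z y) => [->|]; rewrite // -[y \in A]negbK -xyA xA.
Qed.

Lemma circ_adj_sym n S (u v : 'I_n) : circ_adj S u v = circ_adj S v u.
Proof.
by rewrite /circ_adj eq_sym; congr (_ && _); apply: eq_has => a; apply: orbC.
Qed.

Lemma sum_vsum_cut {n S} {A : {set 'I_n}} (g : {set 'I_n} -> nat) :
    (forall x y : 'I_n, circ_adj S x y -> (x \in A) = (y \notin A)) ->
  \sum_(x in A) vsum S g x = \sum_(e in circ_edges n S) g e.
Proof.
move=> cutA; apply: sum_transversal => e.
by rewrite inE => /existsP [x /existsP [y /andP [xy /eqP ->]]]; apply/cards2I_eq1/cutA.
Qed.

Lemma three_le_num_vsums_regular n S d (f : {set 'I_n} -> nat) (u v : 'I_n) :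
    (forall x : 'I_n, #|[set e in circ_edges n S | x \in e]| = d) ->
  circ_adj S u v -> local_antimagic S f -> 3 <= num_vsums S f.
Proof.
move=> regular uv [_ antimagic]; have fuv := antimagic u v uv.
have fvu : (vsum S f v == vsum S f u) = false by rewrite eq_sym (negbTE fuv).
rewrite leqNgt; apply/negP => two_vals.
have vsum2 x : (vsum S f x == vsum S f u) || (vsum S f x == vsum S f v).
  apply: contraT; rewrite negb_or => /andP [xu xv].
  suff : 3 <= num_vsums S f by rewrite leqNgt two_vals.
  apply: (uniq_leq_size (s1 := [:: vsum S f u; vsum S f v; vsum S f x])).
    by rewrite /= !inE !negb_or fuv eq_sym xu eq_sym xv.
  by move=> y; rewrite !inE => /or3P [] /eqP ->; rewrite mem_undup map_f ?mem_enum.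
pose A := [set x | vsum S f x == vsum S f u].
have cutA x y : circ_adj S x y -> (x \in A) = (y \notin A).
  move/antimagic; rewrite !inE.
  by case/orP: (vsum2 x) => /eqP ->; case/orP: (vsum2 y) => /eqP ->;
     rewrite ?eqxx ?fvu ?(negbTE fuv).
have cutAC x y : circ_adj S x y -> (x \in ~: A) = (y \notin ~: A).
  by move=> xy; rewrite !in_setC (cutA x y xy) negbK.
have degree x : vsum S (fun _ : {set 'I_n} => 1) x = d.
  by rewrite -(regular x) -sum1_card; apply: eq_bigl => e; rewrite inE.
have d_gt0 : 0 < d.
  rewrite -(regular u); apply/card_gt0P; exists [set u; v]; rewrite !inE eqxx andbT.
  by apply/existsP; exists u; apply/existsP; exists v; rewrite uv eqxx.
have cardA : #|A| = #|~: A|.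
  apply/eqP; rewrite -(eqn_pmul2r d_gt0) -!sum_nat_const.
  rewrite -!(eq_bigr _ (fun x _ => degree x)).
  by rewrite (sum_vsum_cut _ cutA) (sum_vsum_cut _ cutAC).
have : #|A| * vsum S f u = #|~: A| * vsum S f v.
  have inA x : x \in A -> vsum S f x = vsum S f u by rewrite inE => /eqP.
  have inAC x : x \in ~: A -> vsum S f x = vsum S f v.
    by rewrite !inE; case/orP: (vsum2 x) => /eqP -> //; rewrite eqxx.
  rewrite -!sum_nat_const -(eq_bigr _ inA) -(eq_bigr _ inAC).
  by rewrite (sum_vsum_cut _ cutA) (sum_vsum_cut _ cutAC).
rewrite -cardA => /eqP; rewrite eqn_pmul2l; last by apply/card_gt0P; exists u; rewrite inE.
by rewrite (negbTE fuv).
Qed.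

Definition succ_mod (m u v : nat) : bool := v == u.+1 %[mod m].

Lemma succ_mod_irr m u : 1 < m -> ~~ succ_mod m u u.
Proof.
move=> m_gt1; rewrite /succ_mod -[u in X in X == _]addn0 -addn1 eqn_modDl.
by rewrite mod0n modn_small.
Qed.

Lemma succ_mod_asym m u v : 2 < m -> succ_mod m u v -> ~~ succ_mod m v u.
Proof.
move=> m_gt2 /eqP vu; apply/negP => /eqP uv.
have : u + 0 == u + 2 %[mod m].
  by rewrite addn0 uv -addn1 -modnDml vu modnDml addn1 addn2.
by rewrite eqn_modDl mod0n modn_small.
Qed.

Lemma succ_mod_pred m u x : 0 < m -> succ_mod m u x = (u == x + m.-1 %[mod m]).
Proof.
move=> m_gt0; rewrite /succ_mod -(eqn_modDr m.-1) addSnnS prednK // modnDr.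
by rewrite eq_sym.
Qed.

Lemma sum_mod_class m k c (F : nat -> nat) : c < m ->
  \sum_(w < k * m | w %% m == c) F (w %/ m) = \sum_(b < k) F b.
Proof.
move=> cm; have m_gt0 : 0 < m by apply: leq_ltn_trans cm.
rewrite -(big_mkord (fun w => w %% m == c) (fun w => F (w %/ m))) -(big_mkord xpredT).
elim: k => [|k IHk]; first by rewrite mul0n !big_geq.
rewrite mulSnr (big_cat_nat _ (leq_addr _ _)) //= IHk big_nat_recr //=; congr (_ + _).
rewrite -{1}(add0n (k * m)) big_addn addKn big_nat_cond.
rewrite (eq_bigl (fun i => (0 <= i < m) && (i == c))) -?big_nat_cond; last first.
  by move=> i /=; case im: (i < m); rewrite ?andbF //= addnC modnMDl modn_small.
by rewrite big_nat1_eq /= cm addnC divnMDl // divn_small // addn0.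
Qed.

Lemma circ_diff_add n u v : u < n -> v < n -> u != v ->
  (u + n - v) %% n + (v + n - u) %% n = n.
Proof.
wlog vu : u v / v < u.
  move=> wlog_vu un vn; rewrite neq_ltn => /orP [] uv.
    by rewrite addnC (wlog_vu v u) // neq_ltn uv orbT.
  by apply: wlog_vu => //; rewrite neq_ltn uv orbT.
move=> un vn _; have -> : u + n - v = u - v + n by lia.
rewrite modnDr !modn_small; lia.
Qed.

Lemma circ_diff_mod k m x y : y <= k * m ->
  x = y + (x + k * m - y) %% (k * m) %[mod m].
Proof.
move=> yn; rewrite -modnDmr (modn_dvdm _ (dvdn_mull k (dvdnn m))) modnDmr.
by rewrite subnKC ?(leq_trans yn) ?leq_addl // addnC modnMDl.
Qed.

Lemma succ_mod_of_diff m u v a : 0 < m -> u = v + a %[mod m] ->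
  (a %% m == 1) || (a %% m == m.-1) -> succ_mod m u v || succ_mod m v u.
Proof.
move=> m_gt0 uva /orP [] /eqP am.
  by rewrite /succ_mod uva -modnDmr am addn1 eqxx orbT.
by rewrite succ_mod_pred // uva -modnDmr am eqxx.
Qed.

Lemma circ_adj_succ_mod m k S (u v : 'I_(k * m)) : 2 < m ->
    (forall a, a \in S -> (a %% m == 1) || (a %% m == m.-1)) ->
    (forall d, d < k * m -> d %% m = 1 -> (d \in S) || (k * m - d \in S)) ->
  circ_adj S u v = succ_mod m u v || succ_mod m v u.
Proof.
move=> m_gt2 S_mod S_cover; have m_gt0 : 0 < m by apply: leq_trans m_gt2.
have diff_mod (x y : 'I_(k * m)) : x = y + (x + k * m - y) %% (k * m) %[mod m].
  exact/circ_diff_mod/ltnW.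
have diffS (x y : 'I_(k * m)) a :
    a \in S -> (x + k * m - y) %% (k * m) = a %% (k * m) ->
  succ_mod m x y || succ_mod m y x.
  move=> aS e; apply: (succ_mod_of_diff m x y a m_gt0 _ (S_mod a aS)).
  by rewrite (diff_mod x y) e -modnDmr (modn_dvdm _ (dvdn_mull k (dvdnn m))) modnDmr.
apply/idP/idP.
  case/andP => _ /hasP [a aS /orP [] /eqP e]; first exact: diffS e.
  by rewrite orbC; exact: diffS e.
suff adj_succ (x y : 'I_(k * m)) : succ_mod m y x -> circ_adj S x y.
  by case/orP => /adj_succ; rewrite // circ_adj_sym.
move=> yx; have xy : x != y.
  by apply: contraTneq yx => ->; apply: succ_mod_irr; apply: ltnW.
set d := (x + k * m - y) %% (k * m).
have dm : d %% m = 1.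
  move: yx; rewrite /succ_mod (diff_mod x y) -/d -addn1 eqn_modDl.
  by rewrite [1 %% m]modn_small ?(leq_trans _ m_gt2) // => /eqP.
have dn : d < k * m by rewrite ltn_pmod // (leq_ltn_trans _ (ltn_ord x)).
rewrite /circ_adj xy; apply/hasP; case/orP: (S_cover d dn dm) => dS.
  by exists d; rewrite // (modn_small dn) -/d eqxx.
have d_gt0 : 0 < d by move: dm; case: (d) => //; rewrite mod0n.
have d'E : (y + k * m - x) %% (k * m) = k * m - d.
  by rewrite -[in RHS](circ_diff_add _ _ _ (ltn_ord x) (ltn_ord y) xy) -/d addKn.
exists (k * m - d) => //; apply/orP; right.
by rewrite d'E modn_small ?ltn_subrL ?d_gt0 ?(leq_ltn_trans _ dn).
Qed.

Lemma mem_conn_set s t a : a \in conn_set s t <->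
  exists2 j, j < 2 ^ (s - 2) &
    a = 1 + j * (2 * t + 4) \/ a = 2 * t + 3 + j * (2 * t + 4).
Proof.
split.
  case/flatten_mapP => j; rewrite mem_iota add0n => jl.
  by rewrite !inE => /orP [] /eqP ->; exists j => //; [left|right].
case=> j jl ha; apply/flatten_mapP; exists j; first by rewrite mem_iota.
by rewrite !inE; case: ha => ->; rewrite eqxx ?orbT.
Qed.

Lemma conn_set_mod s t a : a \in conn_set s t ->
  (a %% (2 * t + 4) == 1) || (a %% (2 * t + 4) == (2 * t + 4).-1).
Proof.
case/mem_conn_set => j _ [] ->; rewrite addnC modnMDl modn_small ?eqxx ?orbT //; lia.
Qed.

(* The residue q m + 1 lies in S for q < 2^(s-2); otherwise its negative does. *)
Lemma conn_set_cover s t d : 2 <= s -> d < 2 ^ s.-1 * (2 * t + 4) ->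
    d %% (2 * t + 4) = 1 ->
  (d \in conn_set s t) || (2 ^ s.-1 * (2 * t + 4) - d \in conn_set s t).
Proof.
move=> s_ge2; set m := 2 * t + 4.
have -> : 2 ^ s.-1 = 2 ^ (s - 2) * 2 by rewrite -expnSr; congr (2 ^ _); lia.
set h := 2 ^ (s - 2).
move=> dn dm; have dE : d = d %/ m * m + 1 by rewrite {1}(divn_eq d m) dm.
have m_gt0 : 0 < m by rewrite /m addn4.
have q2h : d %/ m < h * 2 by rewrite ltn_divLR.
case: (ltnP (d %/ m) h) => qh; apply/orP; [left|right]; apply/mem_conn_set.
  by exists (d %/ m) => //; left; rewrite addnC.
exists (h * 2 - 1 - d %/ m); first lia.
by right; move: dE q2h qh; rewrite /m; nia.
Qed.

Lemma odd_predn x : 0 < x -> odd x.-1 = ~~ odd x.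
Proof. by move=> x_gt0; rewrite -subn1 oddB // addbT. Qed.

Lemma odd_pred_mod m c : ~~ odd m -> 0 < m -> odd ((c + m.-1) %% m) = ~~ odd c.
Proof.
move=> m_even m_gt0.
by rewrite odd_mod ?(negbTE m_even) // oddD odd_predn // m_even addbT.
Qed.

Definition zigzag (m c : nat) : nat := if odd c then m.-1 - c./2 else c./2.

Definition class_weight (m c : nat) : nat :=
  if c == 0 then m./2 else if odd c then m.-1 else m.

Lemma zigzag_lt m c : c < m -> zigzag m c < m.
Proof. by rewrite /zigzag; case: ifP => _; lia. Qed.

Lemma zigzag_inj m c c' : c < m -> c' < m -> zigzag m c = zigzag m c' -> c = c'.
Proof.
rewrite /zigzag; have := odd_double_half c; have := odd_double_half c'.
by case: (odd c); case: (odd c') => /=; lia.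
Qed.

Lemma zigzag_add_pred m c : ~~ odd m -> c < m ->
  zigzag m c + zigzag m ((c + m.-1) %% m) = class_weight m c.
Proof.
move=> m_even cm; have m_gt0 : 0 < m by apply: leq_ltn_trans cm.
have := odd_double_half c; have := odd_double_half m.
rewrite /zigzag /class_weight (negbTE m_even).
case: (posnP c) => [-> _ _|c_gt0].
  by rewrite add0n modn_small ?prednK // odd_predn // m_even /=; lia.
have -> : c + m.-1 = c.-1 + m by lia.
by rewrite modnDr modn_small ?odd_predn //; [case: (odd c) => /=; lia | lia].
Qed.

Lemma class_weight_succ m x : ~~ odd m -> 2 < m ->
  class_weight m (x %% m) != class_weight m (x.+1 %% m).
Proof.
move=> m_even m_gt2; have := odd_double_half m; rewrite (negbTE m_even) add0n => mE.
rewrite -addn1 -modnDml addn1 /class_weight; set c := x %% m.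
have cm : c < m by rewrite ltn_pmod // ltnW // ltnW.
have [c1m|c1m] : c.+1 < m \/ c.+1 = m by lia.
  rewrite modn_small //=; case: (posnP c) => [->|_] /=; [|case: (odd c)] => /=;
  by apply/eqP; lia.
have c_odd : odd c by move: m_even; rewrite -c1m /= negbK.
rewrite c1m modnn c_odd eqxx (_ : (c == 0) = false); last lia.
by apply/eqP; lia.
Qed.

Definition grid_rank (k : nat) (p : bool) (a b : nat) : nat :=
  if p then a + k * (k.-1 - b) else k * a + (k.-1 - b).

Lemma grid_rank_lt k p a b : a < k -> b < k -> grid_rank k p a b < k * k.
Proof. by rewrite /grid_rank; case: p; nia. Qed.

Lemma divmod_uniq d q r q' r' : r < d -> r' < d ->
  q * d + r = q' * d + r' -> q = q' /\ r = r'.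
Proof.
move=> rd r'd e; have d_gt0 : 0 < d by apply: leq_ltn_trans rd.
split; first by have := congr1 (divn^~ d) e; rewrite /= !divnMDl // !divn_small ?addn0.
by have := congr1 (modn^~ d) e; rewrite /= !modnMDl !modn_small.
Qed.

Lemma grid_rank_inj k p a b a' b' : a < k -> b < k -> a' < k -> b' < k ->
  grid_rank k p a b = grid_rank k p a' b' -> a = a' /\ b = b'.
Proof.
rewrite /grid_rank => ak bk a'k b'k; case: p => e.
  have [] := @divmod_uniq k (k.-1 - b) a (k.-1 - b') a' ak a'k.
    by rewrite addnC mulnC e addnC mulnC.
  by split=> //; lia.
by have [] := @divmod_uniq k a (k.-1 - b) a' (k.-1 - b'); rewrite ?(mulnC _ k); lia.
Qed.

Lemma grid_rank_sum k p a : a < k ->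
  \sum_(b < k) grid_rank k p a b + \sum_(b < k) grid_rank k (~~ p) b a =
  k * k * k.-1 + k * k.-1.
Proof.
move=> ak; set T := \sum_(b < k) b; set T' := \sum_(b < k) (k.-1 - b).
have TT' : T + T' = k * k.-1.
  rewrite -big_split /= (eq_bigr (fun=> k.-1)) ?sum_nat_const ?card_ord // => b _.
  by have := ltn_ord b; lia.
have row : k * a + k * (k.-1 - a) = k * k.-1 by rewrite -mulnDr; congr (_ * _); lia.
have col : k * T + k * T' = k * (k * k.-1) by rewrite -mulnDr TT'.
rewrite /grid_rank; case: p; rewrite /= !big_split /= -!big_distrr /= !sum_nat_const;
  rewrite card_ord -/T -/T'; first lia.
by have := congr1 (muln k) row; rewrite !mulnDr; lia.
Qed.

Lemma perm_iota1 (s : seq nat) : uniq s -> (forall y, y \in s -> 0 < y <= size s) ->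
  perm_eq s (iota 1 (size s)).
Proof.
move=> s_uniq s_range; apply: (uniq_perm s_uniq (iota_uniq _ _)).
have sub : {subset s <= iota 1 (size s)}.
  by move=> y /s_range; rewrite mem_iota add1n ltnS.
by have [] := uniq_min_size s_uniq sub; rewrite ?size_iota.
Qed.

Definition arcs (m n : nat) : {set 'I_n * 'I_n} :=
  [set p : 'I_n * 'I_n | succ_mod m p.1 p.2].

Definition arc_edge {n : nat} (p : 'I_n * 'I_n) : {set 'I_n} := [set p.1; p.2].

Definition arc_label (m k u w : nat) : nat :=
  1 + k * k * zigzag m (u %% m) + grid_rank k (odd (u %% m)) (u %/ m) (w %/ m).

(* Each edge is labelled through its unique orientation along succ_mod; the
   value 0 off the edge set is never used. *)
Definition blowup_label (m k : nat) (e : {set 'I_(k * m)}) : nat :=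
  if [pick p in arcs m (k * m) | arc_edge p == e] is Some p
  then arc_label m k p.1 p.2 else 0.

Section CycleBlowUp.

Variables (m k : nat) (S : seq nat).
Local Notation n := (k * m).
Hypothesis m_gt2 : 2 < m.
Hypothesis m_even : ~~ odd m.
Hypothesis k_gt0 : 0 < k.
Hypothesis circ_adjE :
  forall u v : 'I_n, circ_adj S u v = succ_mod m u v || succ_mod m v u.

Let m_gt0 : 0 < m := ltnW (ltnW m_gt2).
Let succ_modxx u : succ_mod m u u = false := negbTE (succ_mod_irr m u (ltnW m_gt2)).
Let div_lt (u : 'I_n) : u %/ m < k.
Proof. by rewrite ltn_divLR. Qed.

Lemma arc_edge_inj : {in arcs m n &, injective (@arc_edge n)}.
Proof.
move=> [a b] [a' b']; rewrite !inE /= => ab a'b' e.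
have : a \in arc_edge (a', b') by rewrite -e !inE eqxx.
have : b \in arc_edge (a', b') by rewrite -e !inE eqxx orbT.
rewrite !inE => /orP [] /eqP eb /orP [] /eqP ea; subst a b => //.
- by rewrite succ_modxx in ab.
- by rewrite (negbTE (succ_mod_asym _ _ _ m_gt2 ab)) in a'b'.
- by rewrite succ_modxx in ab.
Qed.

Lemma circ_edgesE : circ_edges n S = arc_edge @: arcs m n.
Proof.
apply/setP => e; rewrite inE; apply/existsP/imsetP.
  case=> u /existsP [v /andP []]; rewrite circ_adjE => /orP [] uv /eqP ->.
    by exists (u, v); rewrite ?inE.
  by exists (v, u); rewrite ?inE //= /arc_edge setUC.
case=> [[u v]]; rewrite inE /= => uv ->.
by exists u; apply/existsP; exists v; rewrite circ_adjE uv eqxx.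
Qed.

Lemma sum_incident_edges (g : {set 'I_n} -> nat) (x : 'I_n) :
  \sum_(e in circ_edges n S | x \in e) g e =
  \sum_(w < n | succ_mod m x w) g [set x; w] +
  \sum_(u < n | succ_mod m u x) g [set u; x].
Proof.
rewrite circ_edgesE big_imset_cond /=; last exact: arc_edge_inj.
rewrite (bigID (fun p : 'I_n * 'I_n => p.1 == x)) /=; congr (_ + _).
  rewrite (eq_bigl (fun p : 'I_n * 'I_n => (p.1 == x) && succ_mod m p.1 p.2)).
    rewrite -(pair_big_dep (pred1 x) (fun a b : 'I_n => succ_mod m a b)
                           (fun a b => g [set a; b])) /=.
    by rewrite big_pred1_eq.
  by move=> [a b]; rewrite !inE /=; case: (eqVneq a x) => [->|]; rewrite ?andbF ?andbT.
rewrite (eq_bigl (fun p : 'I_n * 'I_n => predT p.1 && (p.2 == x) && succ_mod m p.1 p.2)).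
  rewrite -(pair_big_dep predT (fun a b : 'I_n => (b == x) && succ_mod m a b)
                         (fun a b => g [set a; b])).
  rewrite [RHS]big_mkcond; apply: eq_bigr => a _.
  by rewrite big_mkcondr big_pred1_eq.
move=> [a b]; rewrite !inE /=; case: (eqVneq a x) => [->|_] /=.
  by rewrite andbF; case: eqP => [->|]; rewrite ?succ_modxx ?andbF.
by rewrite andbT andbC eq_sym.
Qed.

Lemma card_incident_edges (x : 'I_n) :
  #|[set e in circ_edges n S | x \in e]| = k + k.
Proof.
rewrite -sum1_card (eq_bigl (fun e => (e \in circ_edges n S) && (x \in e))); last first.
  by move=> e; rewrite inE.
rewrite sum_incident_edges.
rewrite [X in _ + X](eq_bigl (fun u : 'I_n => u %% m == (x + m.-1) %% m)); last first.
  by move=> u; rewrite succ_mod_pred.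
by rewrite /succ_mod !(sum_mod_class m k _ (fun=> 1)) ?ltn_pmod ?sum1_card ?card_ord.
Qed.

Lemma card_arcs : #|arcs m n| = k * k * m.
Proof.
rewrite -sum1_card (eq_bigl (fun p : 'I_n * 'I_n => predT p.1 && succ_mod m p.1 p.2));
  last by move=> p; rewrite inE.
rewrite -(pair_big_dep predT (fun u w : 'I_n => succ_mod m u w) (fun _ _ => 1)) /=.
rewrite (eq_bigr (fun _ => k)) ?sum_nat_const ?card_ord; first lia.
move=> u _; rewrite /succ_mod (sum_mod_class m k _ (fun=> 1)) ?ltn_pmod //.
by rewrite sum1_card card_ord.
Qed.

Lemma blowup_label_arc p :
  p \in arcs m n -> blowup_label m k (arc_edge p) = arc_label m k p.1 p.2.
Proof.
move=> pA; rewrite /blowup_label; case: pickP => [q /andP [qA /eqP qp]|/(_ p)].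
  by rewrite (arc_edge_inj _ _ qA pA qp).
by rewrite pA eqxx.
Qed.

Lemma arc_label_range (u w : 'I_n) : 0 < arc_label m k u w <= k * k * m.
Proof.
have zk : k * k * zigzag m (u %% m) + k * k <= k * k * m.
  by rewrite addnC -mulnS leq_mul2l zigzag_lt ?orbT ?ltn_pmod.
have := grid_rank_lt k (odd (u %% m)) _ _ (div_lt u) (div_lt w).
by rewrite /arc_label; lia.
Qed.

Lemma arc_label_inj :
  {in arcs m n &, injective (fun p : 'I_n * 'I_n => arc_label m k p.1 p.2)}.
Proof.
move=> [u w] [u' w']; rewrite !inE /= /succ_mod /arc_label => /eqP wu /eqP w'u' /eqP.
rewrite -!addnA eqn_add2l !(mulnC (k * k)) => /eqP e.
have [/zigzag_inj zz ge] := divmod_uniq _ _ _ _ _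
  (grid_rank_lt _ _ _ _ (div_lt u) (div_lt w))
  (grid_rank_lt _ _ _ _ (div_lt u') (div_lt w')) e.
have cu : u %% m = u' %% m by apply: zz; rewrite ltn_pmod.
rewrite cu in ge.
have [au bw] := grid_rank_inj _ _ _ _ _ _ (div_lt u) (div_lt w) (div_lt u') (div_lt w') ge.
have eu : u = u' :> nat by rewrite (divn_eq u m) (divn_eq u' m) au cu.
have ew : w = w' :> nat by rewrite (divn_eq w m) (divn_eq w' m) bw wu w'u' eu.
by congr (_, _); apply: val_inj.
Qed.

Lemma blowup_label_perm :
  perm_eq [seq blowup_label m k e | e <- enum (circ_edges n S)]
          (iota 1 #|circ_edges n S|).
Proof.
rewrite circ_edgesE cardE -(size_map (blowup_label m k)); apply: perm_iota1.
  rewrite map_inj_in_uniq ?enum_uniq //.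
  move=> e e'; rewrite !mem_enum => /imsetP [p pA ->] /imsetP [q qA ->].
  by rewrite !blowup_label_arc // => /(arc_label_inj _ _ pA qA) ->.
move=> y /mapP [e]; rewrite mem_enum => /imsetP [p pA ->] ->.
rewrite size_map -cardE card_in_imset; last exact: arc_edge_inj.
by rewrite card_arcs blowup_label_arc // arc_label_range.
Qed.

Lemma vsum_blowup_label (x : 'I_n) :
  vsum S (blowup_label m k) x =
  k + k + k * k * k * class_weight m (x %% m) + (k * k * k.-1 + k * k.-1).
Proof.
rewrite /vsum sum_incident_edges.
set c := x %% m; set c' := (x + m.-1) %% m; set a := x %/ m.
rewrite (eq_bigr (fun w : 'I_n => 1 + k * k * zigzag m c + grid_rank k (odd c) a (w %/ m)));
  last by move=> w xw; rewrite -[[set x; w]]/(arc_edge (x, w)) blowup_label_arc ?inE.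
rewrite [X in _ + X](eq_bigl (fun u : 'I_n => u %% m == c')); last first.
  by move=> u; rewrite succ_mod_pred.
rewrite [X in _ + X](eq_bigr (fun u : 'I_n =>
    1 + k * k * zigzag m c' + grid_rank k (odd c') (u %/ m) a)); last first.
  move=> u uc; rewrite -[[set u; x]]/(arc_edge (u, x)).
  rewrite blowup_label_arc ?inE ?succ_mod_pred //.
  by rewrite /arc_label (eqP uc).
rewrite /succ_mod (sum_mod_class m k _ (fun b => _ + grid_rank _ _ _ b)) ?ltn_pmod //.
rewrite (sum_mod_class m k c' (fun b => _ + grid_rank _ _ b a)) ?ltn_pmod //.
rewrite !big_split /= !sum_nat_const !card_ord.
have := grid_rank_sum k (odd c) a (div_lt x).
rewrite -(odd_pred_mod m c) // modnDml -/c'.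
rewrite -(zigzag_add_pred m _ m_even (ltn_pmod x m_gt0)) modnDml -/c -/c'.
set R := \sum_(b < k) _; set R' := \sum_(b < k) _.
by rewrite !muln1 mulnDr !mulnA; lia.
Qed.

Lemma chi_la_blowup : chi_la_is n S 3.
Proof.
pose W c := k + k + k * k * k * c + (k * k * k.-1 + k * k.-1).
have vsumW x : vsum S (blowup_label m k) x = W (class_weight m (x %% m)).
  exact: vsum_blowup_label.
have W_inj c c' : (W c == W c') = (c == c').
  by rewrite /W eqn_add2r eqn_add2l eqn_pmul2l // !muln_gt0 k_gt0.
have n_gt2 : 2 < n := leq_trans m_gt2 (leq_pmull m k_gt0).
have [n_gt0 n_gt1] : 0 < n /\ 1 < n by split; apply: ltnW; rewrite // ltnW.
pose v0 := Ordinal n_gt0; pose v1 := Ordinal n_gt1; pose v2 := Ordinal n_gt2.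
split; last first.
  move=> f; apply: (three_le_num_vsums_regular _ _ _ f v0 v1 card_incident_edges).
  by rewrite circ_adjE /succ_mod eqxx.
exists (blowup_label m k); split; first split.
- exact: blowup_label_perm.
- move=> x y; rewrite circ_adjE !vsumW W_inj.
  by case/orP => /eqP ->; [|rewrite eq_sym]; rewrite class_weight_succ.
rewrite /num_vsums -[3]/(size [:: W m./2; W m.-1; W m]).
apply/perm_size/uniq_perm; first exact: undup_uniq.
  have := odd_double_half m; rewrite (negbTE m_even) /= !inE !W_inj andbT negb_or.
  by lia.
move=> y; rewrite mem_undup; apply/mapP/idP.
  case=> x _ ->; rewrite vsumW /class_weight.
  by case: ifP => _; last case: ifP => _; rewrite !inE eqxx ?orbT.
rewrite !inE => /or3P [] /eqP ->; [exists v0|exists v1|exists v2];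
  by rewrite ?mem_enum // vsumW /= ?mod0n ?modn_small ?(ltnW m_gt2).
Qed.

End CycleBlowUp.

Theorem mainTheorem12 (s t : nat) (hs : 2 <= s) :
  chi_la_is (2 ^ s * (t + 2)) (conn_set s t) 3.
Proof.
have -> : 2 ^ s * (t + 2) = 2 ^ s.-1 * (2 * t + 4).
  by rewrite -[in LHS](prednK (leq_trans _ hs)) // expnS; lia.
apply: chi_la_blowup => [|||u v].
- lia.
- by rewrite oddD oddM.
- by rewrite expn_gt0.
apply: circ_adj_succ_mod; [lia | exact: conn_set_mod | move=> d; exact: conn_set_cover].
Qed.
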